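(* Under the setting of Algorithm 2 with $f\in\mathcal{H}_k$ and invertible kernel matrices, let $X_n=(x_{(n-1)L+1},\dots,x_{nL})$ be the batch selected at round $n$ and $x^*\in\arg\max_{\mathcal{X}}f$. Then $$\frac1L\sum_{i=1}^L\big(f(x^* )-f(x_{(n-1)L+i})\big)\le2\|f\|_{\mathcal{H}_k}\sqrt{\frac{\operatorname{tr}(\operatorname{cov}_{n-1}(X_n,X_n))}{L}}.$$
   Context: Algorithm 2: $X_n$ maximizes over $X=(z_1,\dots,z_L)\in\mathcal{X}^L$ the quantity $\frac1L\sum_i m_{(n-1)L}(z_i)+\|f\|_{\mathcal{H}_k}\big(2\sqrt{\operatorname{tr}(\operatorname{cov}_{n-1}(X,X))/L}-\sqrt{\mathbf 1^T\operatorname{cov}_{n-1}(X,X)\mathbf 1/L^2}\big)$. Here $m_t(x)=\mathbf{k}_t(x)^T\mathbf{K}_t^{-1}\mathbf{f}_t$ with $\mathbf{k}_t(x)=[k(x,x_i)]_{i\le t}$, $\mathbf{K}_t=[k(x_i,x_j)]_{i,j\le t}$, $\mathbf{f}_t=[f(x_i)]_{i\le t}$; $\overline X_n=\{x_1,\dots,x_{nL}\}$; $\operatorname{cov}_n(X,X)=\mathbf{K}(X,X)-\mathbf{K}(\overline X_n,X)^T\mathbf{K}(\overline X_n,\overline X_n)^{-1}\mathbf{K}(\overline X_n,X)$, $\operatorname{cov}_0=\mathbf{K}(X,X)$. *)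

(* R is an arbitrary real closed field (covers the reals). *)
From HB Require Import structures.
From mathcomp Require Import all_boot all_order all_algebra.
Set Implicit Arguments. Unset Strict Implicit. Unset Printing Implicit Defensive.
Import Order.TTheory GRing.Theory Num.Theory.
Local Open Scope ring_scope.

Section GPUCB.
Variables (R : rcfType) (T : Type).

(* (H, ip) is a reproducing kernel Hilbert space of functions T -> R for k:
   a linear space of functions containing every k(.,z), with an inner product
   having the reproducing property, complete for the induced norm.
   (The RKHS of k is unique, so quantifying over all such (H, ip) is faithful.) *)
Definition is_RKHS (k : T -> T -> R) (H : (T -> R) -> Prop)
    (ip : (T -> R) -> (T -> R) -> R) : Prop :=
  (forall z, H (fun y => k y z)) /\
  (forall f g, H f -> H g -> H (fun t => f t + g t)) /\
  (forall (a : R) f, H f -> H (fun t => a * f t)) /\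
  (forall f g, H f -> H g -> ip f g = ip g f) /\
  (forall f g h, H f -> H g -> H h ->
      ip (fun t => f t + g t) h = ip f h + ip g h) /\
  (forall (a : R) f g, H f -> H g -> ip (fun t => a * f t) g = a * ip f g) /\
  (forall f, H f -> 0 <= ip f f) /\
  (forall f, H f -> ip f f = 0 -> forall t, f t = 0) /\
  (forall f z, H f -> ip f (fun y => k y z) = f z) /\
  (forall u : nat -> T -> R, (forall m, H (u m)) ->
     (forall e : R, 0 < e -> exists N, forall m p, (N <= m)%N -> (N <= p)%N ->
        ip (fun t => u m t - u p t) (fun t => u m t - u p t) < e) ->
     exists g, H g /\ forall e : R, 0 < e -> exists N, forall m, (N <= m)%N ->
        ip (fun t => u m t - g t) (fun t => u m t - g t) < e).

Definition rkhs_norm (ip : (T -> R) -> (T -> R) -> R) (f : T -> R) : R :=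
  Num.sqrt (ip f f).

(* Query points x_1, x_2, ... are represented 0-indexed: x 0, x 1, ...;
   \overline X_n = first n*L points. *)
Definition kmat (k : T -> T -> R) (x : nat -> T) (t : nat) : 'M[R]_t :=
  \matrix_(i < t, j < t) k (x i) (x j).

Definition kcross (k : T -> T -> R) (x : nat -> T) (t L : nat)
    (Z : 'I_L -> T) : 'M[R]_(t, L) :=
  \matrix_(i < t, j < L) k (x i) (Z j).

Definition post_mean (k : T -> T -> R) (x : nat -> T) (f : T -> R) (t : nat)
    (z : T) : R :=
  ((\row_(i < t) k (x i) z) *m invmx (kmat k x t) *m (\col_(i < t) f (x i))) 0 0.

(* cov_n(Z,Z) with t = n*L observed points; for t = 0 this is K(Z,Z). *)
Definition post_cov (k : T -> T -> R) (x : nat -> T) (t L : nat)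
    (Z : 'I_L -> T) : 'M[R]_L :=
  \matrix_(i < L, j < L) k (Z i) (Z j)
  - (kcross k x t Z)^T *m invmx (kmat k x t) *m kcross k x t Z.

(* acquisition function of Algorithm 2 at round n (B = ||f||_{H_k}) *)
Definition acq (k : T -> T -> R) (x : nat -> T) (f : T -> R) (B : R)
    (L n : nat) (Z : 'I_L -> T) : R :=
  let C := post_cov k x (n.-1 * L) Z in
  (L%:R)^-1 * \sum_(i < L) post_mean k x f (n.-1 * L) (Z i)
  + B * (2 * Num.sqrt (\tr C / L%:R)
         - Num.sqrt ((((const_mx 1 : 'rV[R]_L) *m C *m (const_mx 1 : 'cV[R]_L)) 0 0)
                     / (L%:R ^+ 2))).

Definition batch (x : nat -> T) (L n : nat) : 'I_L -> T :=
  fun i => x (n.-1 * L + i)%N.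

End GPUCB.

Arguments kcross {R T} k x t L Z.
Arguments post_cov {R T} k x t L Z.
Arguments acq {R T} k x f B L n Z.
Arguments batch {T} x L n i.

From HB Require Import structures.
From mathcomp Require Import all_boot all_order all_algebra.
From mathcomp Require Import ring lra.
From Stdlib Require Import FunctionalExtensionality.
Import Order.TTheory GRing.Theory Num.Theory.
Local Open Scope ring_scope.

Set Implicit Arguments.
Unset Strict Implicit.

(* Fix the t = (n-1)L points observed before round n, with Gram matrix K,
   and a batch Z with weights w.  The function
     g = sum_i w_i k(., Z_i) - sum_j a_j k(., x_j),   a = w Kc^T K^-1,
   lies in the RKHS; by the reproducing property <f, g> is the w-weighted
   error sum_i w_i (f(Z_i) - m(Z_i)) of the posterior mean, and <g, g> is the
   posterior covariance form w cov(Z, Z) w^T.  Cauchy-Schwarz therefore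
   bounds the weighted error by ||f|| sqrt(w cov w^T) (mean_error_bound).
   Two instances are used: a single point z, giving f(z) <= m(z) + ||f||
   sigma(z), and a whole batch with w = 1, giving a lower bound on the mean
   of f over the batch.  Finally, the acquisition function evaluated at the
   constant batch (z, ..., z) is exactly m(z) + ||f|| sigma(z) (acq_const),
   so comparing the selected batch X_n with the constant batch at xstar and
   chaining the two bounds yields the theorem. *)

Section RKHS.
Variables (R : rcfType) (T : Type) (k : T -> T -> R)
  (H : (T -> R) -> Prop) (ip : (T -> R) -> (T -> R) -> R).
Hypothesis hR : is_RKHS k H ip.

Lemma H_kernel z : H (fun y => k y z).
Proof. by case: hR. Qed.

Lemma H_add f g : H f -> H g -> H (fun t => f t + g t).
Proof. by case: hR => _ [h _]; apply: h. Qed.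

Lemma H_scale (a : R) f : H f -> H (fun t => a * f t).
Proof. by case: hR => _ [_ [h _]]; apply: h. Qed.

Lemma ipC f g : H f -> H g -> ip f g = ip g f.
Proof. by case: hR => _ [_ [_ [h _]]]; apply: h. Qed.

Lemma ipDl f g h : H f -> H g -> H h ->
  ip (fun t => f t + g t) h = ip f h + ip g h.
Proof. by case: hR => _ [_ [_ [_ [e _]]]]; apply: e. Qed.

Lemma ipZl (a : R) f g : H f -> H g -> ip (fun t => a * f t) g = a * ip f g.
Proof. by case: hR => _ [_ [_ [_ [_ [h _]]]]]; apply: h. Qed.

Lemma ip_ge0 f : H f -> 0 <= ip f f.
Proof. by case: hR => _ [_ [_ [_ [_ [_ [h _]]]]]]; apply: h. Qed.

Lemma ip_eq0 f : H f -> ip f f = 0 -> forall t, f t = 0.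
Proof. by case: hR => _ [_ [_ [_ [_ [_ [_ [h _]]]]]]]; apply: h. Qed.

Lemma ip_repr f z : H f -> ip f (fun y => k y z) = f z.
Proof. by case: hR => _ [_ [_ [_ [_ [_ [_ [_ [h _]]]]]]]]; apply: h. Qed.

(* The reproducing property forces the kernel to be symmetric. *)
Lemma kernel_sym a b : k a b = k b a.
Proof.
rewrite -(ip_repr a (H_kernel b)) -(ip_repr b (H_kernel a)).
by apply: ipC; apply: H_kernel.
Qed.

Lemma ip_eq0_fun f : H f -> ip f f = 0 -> f = fun _ => 0.
Proof. by move=> Hf ff0; apply: functional_extensionality; apply: ip_eq0. Qed.

Lemma ip0l g : H g -> ip (fun _ => 0) g = 0.
Proof.
move=> Hg; have -> : (fun _ : T => 0 : R) = (fun t => 0 * g t).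
  by apply: functional_extensionality => t; rewrite mul0r.
by rewrite ipZl // mul0r.
Qed.

(* H is nonempty; in applications the witness is the target function. *)
Variables (h0 : T -> R).
Hypothesis H_h0 : H h0.

Lemma H_zero : H (fun _ => 0).
Proof.
suff -> : (fun _ : T => 0 : R) = (fun t => 0 * h0 t) by apply: H_scale.
by apply: functional_extensionality => t; rewrite mul0r.
Qed.

Lemma H_sum m (F : 'I_m -> T -> R) :
  (forall i, H (F i)) -> H (fun y => \sum_(i < m) F i y).
Proof.
elim: m F => [|m IH] F HF.
  by under [fun y => _]functional_extensionality do rewrite big_ord0; apply: H_zero.
under [fun y => _]functional_extensionality do rewrite big_ord_recr.
by apply: H_add; [apply: IH => i | apply: HF].
Qed.

Lemma ip_suml m (F : 'I_m -> T -> R) g : H g -> (forall i, H (F i)) ->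
  ip (fun y => \sum_(i < m) F i y) g = \sum_(i < m) ip (F i) g.
Proof.
move=> Hg; elim: m F => [|m IH] F HF.
  under [fun y => _]functional_extensionality do rewrite big_ord0.
  by rewrite big_ord0 ip0l.
under [fun y => _]functional_extensionality do rewrite big_ord_recr.
rewrite ipDl //; first by rewrite big_ord_recr IH.
by apply: H_sum => i.
Qed.

Definition kcomb m (c : 'rV[R]_m) (p : 'I_m -> T) : T -> R :=
  fun y => \sum_(i < m) c 0 i * k y (p i).

Arguments kcomb {m}.

Lemma H_kcomb m (c : 'rV[R]_m) p : H (kcomb c p).
Proof. by apply: H_sum => i; apply/H_scale/H_kernel. Qed.

Lemma ip_kcomb m (c : 'rV[R]_m) p h :
  H h -> ip (kcomb c p) h = \sum_(i < m) c 0 i * h (p i).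
Proof.
move=> Hh; rewrite ip_suml //; last by move=> i; apply/H_scale/H_kernel.
apply: eq_bigr => i _.
by rewrite ipZl ?(ipC (H_kernel (p i)) Hh) ?ip_repr //; apply: H_kernel.
Qed.

Lemma ip_kcomb2 m l (c : 'rV[R]_m) (d : 'rV[R]_l) p q :
  ip (kcomb c p) (kcomb d q)
  = (c *m (\matrix_(i, j) k (p i) (q j)) *m d^T) 0 0.
Proof.
rewrite ip_kcomb; last exact: H_kcomb.
rewrite /kcomb -mulmxA mxE; apply: eq_bigr => i _; rewrite mxE; congr (_ * _).
by apply: eq_bigr => j _; rewrite !mxE mulrC.
Qed.

Lemma ip_expand f g (s : R) : H f -> H g ->
  ip (fun t => f t + s * g t) (fun t => f t + s * g t)
  = ip f f + 2 * s * ip f g + s ^+ 2 * ip g g.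
Proof.
move=> Hf Hg; have Hsg := H_scale s Hg; have Hu := H_add Hf Hsg.
rewrite ipDl // ipZl // (ipC Hf Hu) (ipC Hg Hu) !ipDl // !ipZl // (ipC Hg Hf).
ring.
Qed.

(* Cauchy-Schwarz; the case <g, g> = 0 uses that g then vanishes. *)
Lemma cauchy_schwarz f g : H f -> H g ->
  `|ip f g| <= Num.sqrt (ip f f) * Num.sqrt (ip g g).
Proof.
move=> Hf Hg; rewrite -sqrtrM ?ip_ge0 // -sqrtr_sqr; apply: ler_wsqrtr.
have [gg0|gg_neq0] := eqVneq (ip g g) 0.
  by rewrite gg0 mulr0 (ipC Hf Hg) (ip_eq0_fun Hg gg0) ip0l // expr0n.
have gg_gt0 : 0 < ip g g by rewrite lt0r gg_neq0 ip_ge0.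
set s := - ip f g / ip g g.
have sgg : s * ip g g = - ip f g by rewrite /s mulfVK.
have := ip_ge0 (H_add Hf (H_scale s Hg)); rewrite ip_expand // => q_ge0.
nra.
Qed.
End RKHS.

Definition post_var (R : rcfType) (T : Type) (k : T -> T -> R) (x : nat -> T)
    (t : nat) (z : T) : R :=
  post_cov k x t 1 (fun _ => z) 0 0.

Lemma post_cov_const (R : rcfType) (T : Type) (k : T -> T -> R) (x : nat -> T)
    (t L : nat) (z : T) :
  post_cov k x t L (fun _ => z) = const_mx (post_var k x t z).
Proof.
apply/matrixP => i j; rewrite /post_var /post_cov /kcross !mxE; congr (_ - _).
apply: eq_bigr => l _; rewrite !mxE; congr (_ * _).
by apply: eq_bigr => m _; rewrite !mxE.
Qed.

Lemma mxtrace_const (R : pzSemiRingType) n (a : R) : \tr (const_mx a : 'M_n) = a *+ n.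
Proof. by rewrite /mxtrace; under eq_bigr do rewrite mxE; rewrite sumr_const card_ord. Qed.

Lemma mulmx_const (R : comPzSemiRingType) m n p (a b : R) :
  (const_mx a : 'M_(m, n)) *m (const_mx b : 'M_(n, p)) = const_mx (a * b *+ n).
Proof.
apply/matrixP => i j; rewrite !mxE; under eq_bigr do rewrite !mxE.
by rewrite sumr_const card_ord.
Qed.

Lemma acq_const (R : rcfType) (T : Type) (k : T -> T -> R) (x : nat -> T)
    (f : T -> R) (B : R) (L r : nat) (z : T) : (0 < L)%N ->
  acq k x f B L r (fun _ => z)
  = post_mean k x f (r.-1 * L) z + B * Num.sqrt (post_var k x (r.-1 * L) z).
Proof.
move=> L_gt0; have L_neq0 : L%:R != 0 :> R by rewrite pnatr_eq0 -lt0n.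
rewrite /acq post_cov_const mxtrace_const !mulmx_const mxE sumr_const card_ord.
set m := post_mean _ _ _ _ z; set c := post_var _ _ _ z.
have -> : (L%:R)^-1 * (m *+ L) = m by rewrite -mulr_natr; field.
have -> : c *+ L / L%:R = c by rewrite -mulr_natr; field.
have -> : 1 * c *+ L * 1 *+ L / L%:R ^+ 2 = c.
  by rewrite mul1r mulr1 -mulr_natr -[_ *+ L]mulr_natr; field.
ring.
Qed.

Section Posterior.
Variables (R : rcfType) (T : Type) (k : T -> T -> R)
  (H : (T -> R) -> Prop) (ip : (T -> R) -> (T -> R) -> R).
Hypothesis hR : is_RKHS k H ip.
Variables (f : T -> R) (x : nat -> T) (t : nat).
Hypotheses (Hf : H f) (K_unit : kmat k x t \in unitmx).

Lemma kmat_sym : (kmat k x t)^T = kmat k x t.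
Proof. by apply/matrixP => i j; rewrite !mxE (kernel_sym hR). Qed.

Definition mean_weights L (Z : 'I_L -> T) (w : 'rV[R]_L) : 'rV[R]_t :=
  w *m (kcross k x t L Z)^T *m invmx (kmat k x t).

Lemma sum_post_mean L (Z : 'I_L -> T) (w : 'rV[R]_L) :
  \sum_(i < L) w 0 i * post_mean k x f t (Z i)
  = \sum_(j < t) mean_weights Z w 0 j * f (x j).
Proof.
transitivity ((w *m ((kcross k x t L Z)^T
                     *m (invmx (kmat k x t) *m \col_(j < t) f (x j)))) 0 0).
  rewrite [RHS]mxE; apply: eq_bigr => i _; rewrite /post_mean -mulmxA !mxE.
  by congr (_ * _); apply: eq_bigr => l _; rewrite !mxE.
by rewrite !mulmxA [LHS]mxE; apply: eq_bigr => j _; rewrite !mxE.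
Qed.

Definition error_repr L (Z : 'I_L -> T) (w : 'rV[R]_L) : T -> R :=
  fun y => kcomb k w Z y + (-1) * kcomb k (mean_weights Z w) (fun j : 'I_t => x j) y.

Lemma H_error_repr L (Z : 'I_L -> T) w : H (error_repr Z w).
Proof. by apply: (H_add hR); last apply: (H_scale hR); apply: (H_kcomb hR Hf). Qed.

Lemma ip_error_repr L (Z : 'I_L -> T) (w : 'rV[R]_L) :
  ip f (error_repr Z w) = \sum_(i < L) w 0 i * (f (Z i) - post_mean k x f t (Z i)).
Proof.
rewrite (ipC hR Hf (H_error_repr Z w)) (ipDl hR) ?(ipZl hR) ?(ip_kcomb hR Hf) //.
2-4: by do ?apply: (H_scale hR); apply: (H_kcomb hR Hf).
rewrite -sum_post_mean mulN1r -sumrB.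
by apply: eq_bigr => i _; rewrite mulrBr.
Qed.

Lemma ip_error_repr_self L (Z : 'I_L -> T) (w : 'rV[R]_L) :
  ip (error_repr Z w) (error_repr Z w) = (w *m post_cov k x t L Z *m w^T) 0 0.
Proof.
have Hw := H_kcomb hR Hf w Z.
have Ha := H_kcomb hR Hf (mean_weights Z w) (fun j : 'I_t => x j).
rewrite /error_repr (ip_expand hR) // (ipC hR Hw Ha) !(ip_kcomb2 hR Hf).
rewrite -[\matrix_(i, j) k (x i) (Z j)]/(kcross k x t L Z).
rewrite -[\matrix_(i, j) k (x i) (x j)]/(kmat k x t).
set Kc := kcross k x t L Z; set K := kmat k x t; set a := mean_weights Z w.
have aK : a *m K = w *m Kc^T by rewrite /a mulmxKV.
have aT : a^T = invmx K *m Kc *m w^T.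
  by rewrite /a !trmx_mul trmx_inv kmat_sym trmxK mulmxA.
have -> : a *m K *m a^T = a *m Kc *m w^T by rewrite aK aT !mulmxA.
rewrite /post_cov mulmxBr mulmxBl !mulmxA -/Kc -/K -[w *m Kc^T *m invmx K]/a.
rewrite [in RHS]mxE [X in _ = _ + X]mxE.
ring.
Qed.

Lemma mean_error_bound L (Z : 'I_L -> T) (w : 'rV[R]_L) :
  `|\sum_(i < L) w 0 i * (f (Z i) - post_mean k x f t (Z i))|
    <= rkhs_norm ip f * Num.sqrt ((w *m post_cov k x t L Z *m w^T) 0 0).
Proof.
rewrite -ip_error_repr -ip_error_repr_self.
exact: (cauchy_schwarz hR Hf (H_error_repr Z w)).
Qed.

Lemma ucb_pointwise z :
  f z <= post_mean k x f t z + rkhs_norm ip f * Num.sqrt (post_var k x t z).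
Proof.
have := mean_error_bound (fun _ : 'I_1 => z) 1%:M.
rewrite big_ord1 mul1mx trmx1 mulmx1 [1%:M 0 0]mxE mul1r ler_norml.
by case/andP => _; rewrite lerBlDl.
Qed.

Lemma batch_mean_lower L (Z : 'I_L -> T) : (0 < L)%N ->
  (L%:R)^-1 * \sum_(i < L) post_mean k x f t (Z i)
    - rkhs_norm ip f * Num.sqrt ((((const_mx 1 : 'rV[R]_L) *m post_cov k x t L Z
                                    *m (const_mx 1 : 'cV[R]_L)) 0 0) / L%:R ^+ 2)
  <= (L%:R)^-1 * \sum_(i < L) f (Z i).
Proof.
move=> L_gt0; have Linv_pos : 0 < (L%:R)^-1 :> R by rewrite invr_gt0 ltr0n.
have := mean_error_bound Z (const_mx 1); rewrite trmx_const ler_norml.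
case/andP => + _; under eq_bigr do rewrite mxE mul1r.
rewrite sumrB -(ler_pM2l Linv_pos).
rewrite [_ / L%:R ^+ 2]mulrC sqrtrM; last by rewrite invr_ge0 exprn_ge0 // ler0n.
rewrite -exprVn sqrtr_sqr ger0_norm; last exact: ltW.
lra.
Qed.
End Posterior.

(* Chain f(xstar) <= m(xstar) + B sigma(xstar) = acq(xstar, ..., xstar)
   <= acq(X_n) with the lower bound on the mean of f over X_n; the penalty
   terms of acq(X_n) cancel, leaving 2 B sqrt(tr cov / L). *)
Theorem mainTheorem12 (R : rcfType) (T : Type) (k : T -> T -> R)
    (H : (T -> R) -> Prop) (ip : (T -> R) -> (T -> R) -> R)
    (f : T -> R) (L : nat) (x : nat -> T) (n : nat) (xstar : T) :
  is_RKHS k H ip -> H f ->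
  (0 < L)%N -> (0 < n)%N ->
  (forall j, (j < n)%N -> kmat k x (j * L) \in unitmx) ->
  (forall r, (0 < r)%N -> (r <= n)%N -> forall Z : 'I_L -> T,
     acq k x f (rkhs_norm ip f) L r Z <= acq k x f (rkhs_norm ip f) L r (batch x L r)) ->
  (forall z, f z <= f xstar) ->
  (L%:R)^-1 * \sum_(i < L) (f xstar - f (batch x L n i))
    <= 2 * rkhs_norm ip f
         * Num.sqrt (\tr (post_cov k x (n.-1 * L) L (batch x L n)) / L%:R).
Proof.
move=> hR Hf L_gt0 n_gt0 K_unit selection _.
have K_prev : kmat k x (n.-1 * L) \in unitmx by apply: K_unit; rewrite prednK.
have ucb := ucb_pointwise hR Hf K_prev xstar.
have lower := batch_mean_lower hR Hf K_prev (batch x L n) L_gt0.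
have := selection n n_gt0 (leqnn n) (fun _ => xstar).
rewrite acq_const // /acq => selected.
have L_neq0 : L%:R != 0 :> R by rewrite pnatr_eq0 -lt0n.
rewrite sumrB sumr_const card_ord -[f xstar *+ L]mulr_natl mulrBr mulKf //.
lra.
Qed.
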